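(* Let $j\in\mathbb Z$ and $\nu\in\mathbb C$ with $3\nu\in\mathbb Z$, $3\nu\equiv j\bmod 2$, and such that it is not the case that $\nu\in\mathbb Z$ and $\nu\equiv j\bmod 2$. Then the set $\{j'\in\mathbb Z:(j',\nu')\in W(j,\nu)\text{ for some }\nu'\}$ contains representatives of all three classes of $\mathbb Z/3\mathbb Z$.
   Context: $W$ is the group of linear maps of $\mathbb C^2$ generated by $S_1(j,\nu)=\bigl(\frac{3\nu-j}2,\frac{j+\nu}2\bigr)$ and $S_2(j,\nu)=\bigl(-\frac{3\nu+j}2,\frac{\nu-j}2\bigr)$ (isomorphic to the symmetric group $S_3$); $W(j,\nu)$ denotes the orbit of $(j,\nu)$. For $x\in\mathbb C$ and $j\in\mathbb Z$, ''$x\equiv j\bmod 2$'' means $x\in\mathbb Z$ and $x-j\in2\mathbb Z$. *)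

From HB Require Import structures.
From mathcomp Require Import all_boot all_order all_algebra.
From mathcomp Require Import complex.
From mathcomp Require Import reals.
Set Implicit Arguments. Unset Strict Implicit. Unset Printing Implicit Defensive.
Import Order.TTheory GRing.Theory Num.Theory.
Local Open Scope ring_scope.

Section W.
Variable R : realType.
Local Notation C := R[i].

Definition S1 (p : C * C) : C * C :=
  ((3 * p.2 - p.1) / 2, (p.1 + p.2) / 2).
Definition S2 (p : C * C) : C * C :=
  (- (3 * p.2 + p.1) / 2, (p.2 - p.1) / 2).

(* W = group generated by S1 and S2.  Both generators are involutions,
   so the generated group is the closure of id under left composition
   with S1 and S2. *)
Inductive inW : (C * C -> C * C) -> Prop :=
  | inW_id : inW id
  | inW_S1 w : inW w -> inW (S1 \o w)
  | inW_S2 w : inW w -> inW (S2 \o w).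

Definition in_W_orbit (p p' : C * C) : Prop := exists w, inW w /\ w p = p'.

Definition is_intC (x : C) : Prop := exists k : int, x = k%:~R.

Definition congr_mod2 (x : C) (j : int) : Prop :=
  exists k : int, x = k%:~R /\ (k = j %[mod 2])%Z.
End W.

(** The two reflections send (j, nu) with 3 nu = k to first coordinates
    (k - j)/2 and -(k + j)/2, which are congruent to j - k and j + k modulo 3.
    The hypotheses force k to be an integer of the parity of j that is not
    divisible by 3, so j - k, j and j + k run through all classes mod 3. *)
From HB Require Import structures.
From mathcomp Require Import all_boot all_order all_algebra.
From mathcomp Require Import complex reals.
From mathcomp Require Import zify.
Set Implicit Arguments. Unset Strict Implicit. Unset Printing Implicit Defensive.
Import Order.TTheory GRing.Theory Num.Theory.
Local Open Scope ring_scope.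

Lemma modz3_cover (j k a b r : int) :
  ~~ (3 %| k)%Z -> 2 * a = k - j -> 2 * b = k + j ->
  [\/ (j = r %[mod 3])%Z, (a = r %[mod 3])%Z | (- b = r %[mod 3])%Z].
Proof.
move=> k3 ha hb.
have [hj|hj] := boolP ((j - r) %% 3 == 0)%Z; first by apply: Or31; lia.
have [hA|hA] := boolP ((a - r) %% 3 == 0)%Z; first by apply: Or32; lia.
by apply: Or33; lia.
Qed.

Section Orbit.
Variable R : realType.
Local Notation C := R[i].

Lemma in_W_orbit_refl (p : C * C) : in_W_orbit p p.
Proof. by exists id; split; first exact: inW_id. Qed.

Lemma in_W_orbit_S1 (p : C * C) : in_W_orbit p (S1 p).
Proof. by exists (@S1 R \o id); split; first exact/inW_S1/inW_id. Qed.

Lemma in_W_orbit_S2 (p : C * C) : in_W_orbit p (S2 p).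
Proof. by exists (@S2 R \o id); split; first exact/inW_S2/inW_id. Qed.

Lemma S1_fst_int (j k a : int) (nu : C) :
  3 * nu = k%:~R -> 2 * a = k - j -> (S1 (j%:~R, nu)).1 = a%:~R.
Proof.
move=> hk /(congr1 (fun z : int => z%:~R : C)); rewrite /S1 /= hk intrM intrB => ha.
by rewrite -ha mulrAC divff ?mul1r // intr_eq0.
Qed.

Lemma S2_fst_int (j k b : int) (nu : C) :
  3 * nu = k%:~R -> 2 * b = k + j -> (S2 (j%:~R, nu)).1 = (- b)%:~R.
Proof.
move=> hk /(congr1 (fun z : int => z%:~R : C)); rewrite /S2 /= hk intrM intrD => hb.
by rewrite -hb intrN mulNr mulrAC divff ?mul1r // intr_eq0.
Qed.

End Orbit.

Theorem lemma9p2 (R : realType) (j : int) (nu : R[i])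
  (h3 : is_intC (3 * nu))
  (h3j : congr_mod2 (3 * nu) j)
  (hnot : ~ (is_intC nu /\ congr_mod2 nu j)) :
  forall r : int, exists j' : int, (j' = r %[mod 3])%Z /\
    exists nu' : R[i], in_W_orbit (j%:~R : R[i], nu) (j'%:~R : R[i], nu').
Proof.
move=> r; case: h3j => k [hk hkj].
have k3 : ~~ (3 %| k)%Z.
  apply/negP => /dvdzP [t kE].
  have nuE : nu = t%:~R.
    by apply: (mulfI (_ : (3 : R[i]) != 0)); rewrite ?pnatr_eq0 // hk kE intrM mulrC.
  by apply: hnot; split; exists t => //; split => //; lia.
have [a ha] : exists a, 2 * a = k - j by exists ((k - j) %/ 2)%Z; lia.
have [b hb] : exists b, 2 * b = k + j by exists ((k + j) %/ 2)%Z; lia.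
case: (modz3_cover r k3 ha hb) => hr.
- by exists j; split => //; exists nu; exact: in_W_orbit_refl.
- exists a; split => //; exists (S1 (j%:~R, nu)).2.
  by rewrite -(S1_fst_int hk ha); exact: in_W_orbit_S1.
- exists (- b); split => //; exists (S2 (j%:~R, nu)).2.
  by rewrite -(S2_fst_int hk hb); exact: in_W_orbit_S2.
Qed.
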